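(* Let $f:\mathbb{R}^n\to\mathbb{R}$ and $c:\mathbb{R}^n\to\mathbb{R}^m$ ($m<n$) be smooth, with $g=\nabla f$ and Jacobian $J=\nabla c$. Suppose noisy evaluations satisfy, for all $x$, $|\tilde f(x)-f(x)|\le\epsilon_f$, $\|\tilde c(x)-c(x)\|_1\le\epsilon_c$, $\|\tilde g(x)-g(x)\|\le\epsilon_g$, $\|\tilde J(x)-J(x)\|_{1,2}\le\epsilon_J$. Let $\{x_k\}$ be a sequence with $\sigma_{\min}(J_k)\ge\gamma>\epsilon_J$ for all $k$; set $\delta=1/(\gamma-\epsilon_J)$, $\eta=1/\gamma$. Let $0<\beta_k\le b_u$, let $d_k$ solve $\min_d\tfrac12\beta_k\|d\|^2+\tilde g_k^Td$ s.t. $\tilde c_k+\tilde J_kd=0$; fix $\tau\in(0,1)$ and suppose $\pi_k\ge\frac{1}{1-\tau}\|(\tilde J_k\tilde J_k^T)^{-1}\tilde J_k\tilde g_k\|_\infty$ for every $k$. Define $\psi_\pi(x)=\frac{1}{b_u}\|P(x)g(x)\|^2+\pi\tau\|c(x)\|_1$ and $$E(x,\beta,\pi)=\frac{1}{\beta}\big(\|g(x)\|^2\eta\epsilon_J+\epsilon_g\|g(x)\|\big)+\epsilon_g\delta(\|c(x)\|_1+\epsilon_c)+\pi\Big[(2-\tau)\epsilon_c+\epsilon_J\Big(\delta(\|c(x)\|_1+\epsilon_c)+\frac{1}{\beta}\big(\|P(x)g(x)\|+\|g(x)\|\eta\epsilon_J+\epsilon_g\big)\Big)\Big].$$ Choose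 any $\theta_1\in[0,1)$. For any $x_k$ such that $\psi_{\pi_k}(x_k)\ge E(x_k,\beta_k,\pi_k)/(1-\theta_1)$, we have $$\ell(x_k;d_k)\le-\theta_1\Big(\frac{1}{\beta_k}g_k^TP_kg_k+\tau\pi_k\|c_k\|_1\Big)\le-\theta_1\psi_{\pi_k}(x_k),$$ where $\ell(x_k;d_k)=g_k^Td_k+\pi_k\|c_k+J_kd_k\|_1-\pi_k\|c_k\|_1$.
   Context: $\|\cdot\|$ is the Euclidean norm; $\|A\|_{1,2}=\sup_{x\ne0}\|Ax\|_1/\|x\|$; $\sigma_{\min}$ is the smallest singular value. Subscript $k$ denotes evaluation at $x_k$. $P(x)=I-J(x)^T(J(x)J(x)^T)^{-1}J(x)$ and $P_k=P(x_k)$. The constant $b_u$ is an upper bound on $\beta_k$ for all $k$. *)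

From HB Require Import structures.
From mathcomp Require Import all_boot all_order all_algebra.
From mathcomp Require Import all_classical all_reals all_analysis.
Set Implicit Arguments. Unset Strict Implicit. Unset Printing Implicit Defensive.
Import Order.TTheory GRing.Theory Num.Theory.
Import numFieldNormedType.Exports.
Local Open Scope classical_set_scope.
Local Open Scope ring_scope.

Section Defs.
Variable R : realType.

Definition dotv n (u v : 'cV[R]_n) : R := \sum_(i < n) u i 0 * v i 0.
Definition norm2 n (v : 'cV[R]_n) : R := Num.sqrt (\sum_(i < n) v i 0 ^+ 2).
Definition norm1 n (v : 'cV[R]_n) : R := \sum_(i < n) `|v i 0|.
Definition norminf n (v : 'cV[R]_n) : R := \big[Num.max/0]_(i < n) `|v i 0|.

Definition opnorm12 m n (A : 'M[R]_(m, n)) : R :=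
  sup [set norm1 (A *m x) / norm2 x | x in [set x : 'cV[R]_n | x != 0]].

Definition sigma_min m n (J : 'M[R]_(m, n)) : R :=
  Num.sqrt (inf [set a : R | eigenvalue (J *m J^T) a]).

Definition projP m n (J : 'M[R]_(m, n)) : 'M[R]_n :=
  1%:M - J^T *m invmx (J *m J^T) *m J.

End Defs.

From HB Require Import structures.
From mathcomp Require Import all_boot all_order all_algebra.
From mathcomp Require Import all_classical all_reals all_analysis.
From mathcomp Require Import ring lra.
Import Order.TTheory GRing.Theory Num.Theory.
Import numFieldNormedType.Exports.
Local Open Scope classical_set_scope.
Local Open Scope ring_scope.

(* The optimality conditions of the subproblem give the step as a tangential plus a normal part,
   d = -(1/beta) Pt gt - Jt^T (Jt Jt^T)^-1 ct, with Pt the projection onto ker Jt.  The bound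
   sigma_min(J) >= gamma says |J^T y| >= gamma |y|, so |Jt^T y| >= (gamma - eps_J) |y|; this bounds
   the normal part by delta |ct|_1, and it keeps Pt close to P:
   |Pt g| <= |P g| + (eps_J/gamma) |g| and |P g|^2 <= |Pt g|^2 + (eps_J/gamma) |g|^2, the latter
   reducing to an inequality between five lengths in a plane.  Since ct + Jt d = 0, the linearised
   constraint satisfies |c + J d|_1 <= eps_c + eps_J |d|, and the choice of pi makes the multiplier
   term at most (1 - tau) pi |ct|_1.  Altogether
   l(x; d) <= -(g^T P g / beta + tau pi |c|_1) + E, and the hypothesis E <= (1 - theta1) psi
   together with psi <= g^T P g / beta + tau pi |c|_1 (as beta <= b_u) absorbs E. *)

Lemma le_of_sqr_le {R : realDomainType} (a b : R) : 0 <= b -> a ^+ 2 <= b ^+ 2 -> a <= b.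
Proof. by move=> b0 ab; rewrite leNgt; apply/negP => ba; nra. Qed.

Lemma quadratic_ge0_lin_coef_eq0 {R : realFieldType} (a b : R) :
  0 <= b -> (forall t, 0 <= a * t + b * t ^+ 2) -> a = 0.
Proof.
move=> b0 ge0; have b1_neq0 : b + 1 != 0 by rewrite gt_eqF // ltr_wpDl.
have := ge0 (- a / (b + 1)).
have -> : a * (- a / (b + 1)) + b * (- a / (b + 1)) ^+ 2 = - (a / (b + 1)) ^+ 2.
  by field.
rewrite oppr_ge0 => le0; have /eqP : a / (b + 1) = 0.
  by apply/eqP; rewrite -sqrf_eq0 eq_le le0 sqr_ge0.
by rewrite mulf_eq0 invr_eq0 (negbTE b1_neq0) orbF => /eqP.
Qed.


Section InnerProduct.
Context {R : realType} {n : nat}.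
Implicit Types (a : R) (u v w : 'cV[R]_n).

Lemma dotvE u v : dotv u v = (u^T *m v) 0 0.
Proof. by rewrite /dotv mxE; apply: eq_bigr => i _; rewrite mxE. Qed.

Lemma dotvC u v : dotv u v = dotv v u.
Proof. by apply: eq_bigr => i _; rewrite mulrC. Qed.

Lemma dotvDl u v w : dotv (u + v) w = dotv u w + dotv v w.
Proof. by rewrite /dotv -big_split; apply: eq_bigr => i _; rewrite mxE mulrDl. Qed.

Lemma dotvDr u v w : dotv w (u + v) = dotv w u + dotv w v.
Proof. by rewrite dotvC dotvDl !(dotvC w). Qed.

Lemma dotvZl a u v : dotv (a *: u) v = a * dotv u v.
Proof. by rewrite /dotv mulr_sumr; apply: eq_bigr => i _; rewrite mxE mulrA. Qed.

Lemma dotvZr a u v : dotv u (a *: v) = a * dotv u v.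
Proof. by rewrite dotvC dotvZl dotvC. Qed.

Lemma dotvNl u v : dotv (- u) v = - dotv u v.
Proof. by rewrite -scaleN1r dotvZl mulN1r. Qed.

Lemma dotvNr u v : dotv u (- v) = - dotv u v.
Proof. by rewrite dotvC dotvNl dotvC. Qed.

Lemma dotvBl u v w : dotv (u - v) w = dotv u w - dotv v w.
Proof. by rewrite dotvDl dotvNl. Qed.

Lemma dotvBr u v w : dotv w (u - v) = dotv w u - dotv w v.
Proof. by rewrite dotvDr dotvNr. Qed.

Lemma dotv0l v : dotv 0 v = 0.
Proof. by rewrite /dotv big1 // => i _; rewrite mxE mul0r. Qed.

Lemma dotv0r v : dotv v 0 = 0.
Proof. by rewrite dotvC dotv0l. Qed.

Lemma dotvv_ge0 v : 0 <= dotv v v.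
Proof. by apply: sumr_ge0 => i _; rewrite -expr2 sqr_ge0. Qed.

Lemma dotvv_eq0 v : dotv v v = 0 -> v = 0.
Proof.
move=> vv0; apply/matrixP => i j; rewrite ord1 mxE.
have /psumr_eq0P vi0 : \sum_(k < n) v k 0 ^+ 2 = 0.
  by rewrite -[RHS]vv0; apply: eq_bigr => k _; rewrite expr2.
by apply/eqP; rewrite -sqrf_eq0 vi0 // => k _; rewrite sqr_ge0.
Qed.

Lemma norm2E v : norm2 v = Num.sqrt (dotv v v).
Proof. by congr Num.sqrt; apply: eq_bigr => i _; rewrite expr2. Qed.

Lemma norm2_sqr v : norm2 v ^+ 2 = dotv v v.
Proof. by rewrite norm2E sqr_sqrtr ?dotvv_ge0. Qed.

Lemma norm2_ge0 v : 0 <= norm2 v.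
Proof. exact: sqrtr_ge0. Qed.

Lemma norm2_eq0 v : norm2 v = 0 -> v = 0.
Proof. by move=> v0; apply: dotvv_eq0; rewrite -norm2_sqr v0 expr0n. Qed.

Lemma norm2_gt0 v : v != 0 -> 0 < norm2 v.
Proof. by move=> v0; rewrite lt_def norm2_ge0 andbT; apply: contra v0 => /eqP/norm2_eq0->. Qed.

Lemma dotv_le u v : dotv u v <= norm2 u * norm2 v.
Proof.
have [u0|u0] := eqVneq (norm2 u) 0; first by rewrite u0 mul0r (norm2_eq0 _ u0) dotv0l.
have [v0|v0] := eqVneq (norm2 v) 0; first by rewrite v0 mulr0 (norm2_eq0 _ v0) dotv0r.
have uv_gt0 : 0 < norm2 u * norm2 v by rewrite mulr_gt0 // lt_def ?u0 ?v0 norm2_ge0.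
have := dotvv_ge0 (norm2 v *: u - norm2 u *: v).
rewrite !dotvBl !dotvBr !dotvZl !dotvZr -!norm2_sqr (dotvC v u) => h.
rewrite -subr_ge0 -(pmulr_rge0 _ uv_gt0); nra.
Qed.

Lemma norm2N v : norm2 (- v) = norm2 v.
Proof. by congr Num.sqrt; apply: eq_bigr => i _; rewrite mxE sqrrN. Qed.

Lemma normr_dotv_le u v : `|dotv u v| <= norm2 u * norm2 v.
Proof.
rewrite ler_norml dotv_le andbT lerNl -dotvNl.
by apply: le_trans (dotv_le _ _) _; rewrite norm2N.
Qed.

Lemma norm2D u v : norm2 (u + v) <= norm2 u + norm2 v.
Proof.
apply: le_of_sqr_le; first by rewrite addr_ge0 ?norm2_ge0.
rewrite norm2_sqr !dotvDl !dotvDr (dotvC v u) -!norm2_sqr.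
have := dotv_le u v; nra.
Qed.

Lemma norm2B u v : norm2 (u - v) <= norm2 u + norm2 v.
Proof. by rewrite -(norm2N v) norm2D. Qed.

Lemma norm2Z a v : norm2 (a *: v) = `|a| * norm2 v.
Proof.
by rewrite !norm2E dotvZl dotvZr mulrA -expr2 sqrtrM ?sqr_ge0 // sqrtr_sqr.
Qed.

Lemma normr_coord_le_norm2 v i : `|v i 0| <= norm2 v.
Proof.
rewrite -sqrtr_sqr ler_sqrt; last by apply: sumr_ge0 => *; rewrite sqr_ge0.
by rewrite (bigD1 i) //= lerDl sumr_ge0 // => *; rewrite sqr_ge0.
Qed.

Lemma norm1_ge0 v : 0 <= norm1 v.
Proof. exact: sumr_ge0. Qed.

Lemma norm1D u v : norm1 (u + v) <= norm1 u + norm1 v.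
Proof. by rewrite /norm1 -big_split; apply: ler_sum => i _; rewrite mxE ler_normD. Qed.

Lemma norm1N v : norm1 (- v) = norm1 v.
Proof. by apply: eq_bigr => i _; rewrite mxE normrN. Qed.

Lemma norm2_le_norm1 v : norm2 v <= norm1 v.
Proof.
apply: le_of_sqr_le; first exact: norm1_ge0.
rewrite sqr_sqrtr; last by apply: sumr_ge0 => *; rewrite sqr_ge0.
rewrite /norm1 expr2 mulr_suml; apply: ler_sum => i _.
rewrite (bigD1 i) //= mulrDr -expr2 real_normK ?num_real // lerDl.
by rewrite mulr_ge0 ?sumr_ge0.
Qed.

Lemma norminf_ge0 v : 0 <= norminf v.
Proof. by apply: (big_ind (fun x => 0 <= x)) => // x y x0 y0; rewrite le_max x0. Qed.

Lemma normr_dotv_le_norminf u v : `|dotv u v| <= norminf u * norm1 v.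
Proof.
rewrite /dotv /norm1 mulr_sumr; apply: le_trans (ler_norm_sum _ _ _) _.
by apply: ler_sum => i _; rewrite normrM ler_wpM2r // (le_bigmax 0 (fun i => `|u i 0|)).
Qed.

End InnerProduct.

Lemma dotv_mulmxl {R : realType} {m n : nat} (A : 'M[R]_(m, n)) (u : 'cV[R]_n) (y : 'cV[R]_m) :
  dotv (A *m u) y = dotv u (A^T *m y).
Proof. by rewrite !dotvE trmx_mul mulmxA. Qed.

Lemma dotv_mulmxr {R : realType} {m n : nat} (A : 'M[R]_(m, n)) (u : 'cV[R]_n) (y : 'cV[R]_m) :
  dotv y (A *m u) = dotv (A^T *m y) u.
Proof. by rewrite dotvC dotv_mulmxl dotvC. Qed.

Section OperatorNorm.
Context {R : realType} {m n : nat}.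
Implicit Types (A : 'M[R]_(m, n)) (e : R).

Lemma norm1_mulmx_le A (v : 'cV[R]_n) : norm1 (A *m v) <= opnorm12 A * norm2 v.
Proof.
have [->|v0] := eqVneq v 0.
  by rewrite mulmx0 norm2E dotv0l sqrtr0 mulr0 /norm1 big1 // => i _; rewrite mxE normr0.
rewrite -ler_pdivrMr ?(norm2_gt0 _ v0) //; apply: sup_upper_bound; last by exists v.
split; first by exists (norm1 (A *m v) / norm2 v); exists v.
exists (\sum_(i < m) \sum_(j < n) `|A i j|) => _ [w /= w0 <-].
rewrite ler_pdivrMr ?(norm2_gt0 _ w0) // /norm1 mulr_suml; apply: ler_sum => i _.
rewrite mxE mulr_suml; apply: le_trans (ler_norm_sum _ _ _) _.
by apply: ler_sum => j _; rewrite normrM ler_wpM2l // normr_coord_le_norm2.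
Qed.

Lemma opnorm12_ge0 A : (0 < n)%N -> 0 <= opnorm12 A.
Proof.
move=> n_gt0; pose v : 'cV[R]_n := const_mx 1.
have v0 : v != 0.
  by apply/eqP => /matrixP /(_ (Ordinal n_gt0) 0) /eqP; rewrite !mxE oner_eq0.
rewrite -(pmulr_lge0 _ (norm2_gt0 _ v0)).
exact: le_trans (norm1_ge0 _) (norm1_mulmx_le A v).
Qed.

Lemma norm2_trmx_mulmx_le A e (y : 'cV[R]_m) :
  0 <= e -> (forall v, norm2 (A *m v) <= e * norm2 v) -> norm2 (A^T *m y) <= e * norm2 y.
Proof.
move=> e0 Ae; have [w0|w0] := eqVneq (A^T *m y) 0.
  by rewrite w0 norm2E dotv0l sqrtr0 mulr_ge0 ?norm2_ge0.
rewrite -(ler_pM2r (norm2_gt0 _ w0)) -expr2 norm2_sqr {1}dotv_mulmxl trmxK.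
by apply: le_trans (dotv_le _ _) _; rewrite mulrC mulrAC ler_wpM2r ?norm2_ge0.
Qed.

End OperatorNorm.

Lemma unitmx_of_ker {R : fieldType} {m : nat} (M : 'M[R]_m) :
  (forall y : 'cV[R]_m, M *m y = 0 -> y = 0) -> M \in unitmx.
Proof.
move=> Minj; rewrite -unitmx_tr -row_free_unit -kermx_eq0.
apply/eqP/row_matrixP => i; rewrite row0.
have /sub_kermxP kerMi : (row i (kermx M^T) <= kermx M^T)%MS by apply: row_sub.
have /Minj : M *m (row i (kermx M^T))^T = 0 by rewrite -[M in M *m _]trmxK -trmx_mul kerMi trmx0.
by move/(congr1 trmx); rewrite trmxK trmx0.
Qed.

Section Projection.
Context {R : realType} {m n : nat} (K : 'M[R]_(m, n)).
Hypothesis KKT_unit : K *m K^T \in unitmx.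
Local Notation P := (projP K).
Local Notation W := (invmx (K *m K^T)).

Lemma projP_tr : P^T = P.
Proof. by rewrite /projP linearB /= trmx1 !trmx_mul trmxK trmx_inv trmx_mul trmxK mulmxA. Qed.

Lemma mulmx_projP : K *m P = 0.
Proof. by rewrite /projP mulmxBr mulmx1 !mulmxA mulmxV // mul1mx subrr. Qed.

Lemma projP_mul_tr : P *m K^T = 0.
Proof. by rewrite -projP_tr -trmx_mul mulmx_projP trmx0. Qed.

Lemma projP_idem : P *m P = P.
Proof. by rewrite {2}/projP mulmxBr mulmx1 !mulmxA projP_mul_tr !mul0mx subr0. Qed.

Lemma projP_decomp (g : 'cV[R]_n) : g = P *m g + K^T *m (W *m (K *m g)).
Proof. by rewrite /projP mulmxBl mul1mx !mulmxA subrK. Qed.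

Lemma dotv_projP_tr (g : 'cV[R]_n) (z : 'cV[R]_m) : dotv (P *m g) (K^T *m z) = 0.
Proof. by rewrite dotv_mulmxl projP_tr mulmxA projP_mul_tr mul0mx dotv0r. Qed.

Lemma dotv_projP (g : 'cV[R]_n) : dotv g (P *m g) = norm2 (P *m g) ^+ 2.
Proof. by rewrite norm2_sqr -{1}projP_idem -mulmxA dotv_mulmxr projP_tr. Qed.

Lemma norm2_projP_pythagoras (g : 'cV[R]_n) :
  norm2 g ^+ 2 = norm2 (P *m g) ^+ 2 + norm2 (K^T *m (W *m (K *m g))) ^+ 2.
Proof.
rewrite !norm2_sqr {1 2}(projP_decomp g) dotvDl !dotvDr dotv_projP_tr.
by rewrite (dotvC _ (P *m g)) dotv_projP_tr addr0 add0r.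
Qed.

Lemma norm2_projP_le (g : 'cV[R]_n) : norm2 (P *m g) <= norm2 g.
Proof.
apply: le_of_sqr_le; first exact: norm2_ge0.
by rewrite [X in _ <= X]norm2_projP_pythagoras lerDl sqr_ge0.
Qed.

End Projection.

Section RayleighQuotient.
Context {R : realType} {m : nat} (M : 'M[R]_m).

Let sqr_norm (v : 'rV[R]_m) := \sum_(i < m) v 0 i ^+ 2.
Let quad (v : 'rV[R]_m) := \sum_(i < m) v 0 i * \sum_(j < m) M i j * v 0 j.

Let continuous_sum {T : topologicalType} {k : nat} (F : 'I_k -> T -> R) :
  (forall i, continuous (F i)) -> continuous (fun x => \sum_(i < k) F i x).
Proof. by move=> Fc x; apply: cvg_big => [|i _]; [exact: add_continuous | exact: Fc]. Qed.

Let sqr_norm_continuous : continuous sqr_norm.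
Proof. by apply: continuous_sum => i v; apply: continuousM; exact: coord_continuous. Qed.

Let quad_continuous : continuous quad.
Proof.
apply: continuous_sum => i v; apply: continuousM; first exact: coord_continuous.
apply: continuous_sum => j w; apply: continuousM; first exact: cst_continuous.
exact: coord_continuous.
Qed.

Let quadZ a v : quad (a *: v) = a ^+ 2 * quad v.
Proof.
rewrite /quad mulr_sumr; apply: eq_bigr => i _.
have -> : \sum_(j < m) M i j * (a *: v) 0 j = a * \sum_(j < m) M i j * v 0 j.
  by rewrite mulr_sumr; apply: eq_bigr => j _; rewrite mxE mulrCA.
by rewrite mxE expr2; ring.
Qed.

Let sqr_normZ a v : sqr_norm (a *: v) = a ^+ 2 * sqr_norm v.
Proof. by rewrite /sqr_norm mulr_sumr; apply: eq_bigr => i _; rewrite mxE exprMn. Qed.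

Let sqr_norm_tr (w : 'cV[R]_m) : sqr_norm w^T = dotv w w.
Proof. by apply: eq_bigr => i _; rewrite mxE expr2. Qed.

Let quad_tr (w : 'cV[R]_m) : quad w^T = dotv w (M *m w).
Proof.
by apply: eq_bigr => i _; rewrite !mxE; congr (_ * _); apply: eq_bigr => j _; rewrite mxE.
Qed.

Lemma rayleigh_min : (0 < m)%N ->
  exists2 y : 'cV[R]_m, dotv y y = 1 &
    forall v, dotv y (M *m y) * dotv v v <= dotv v (M *m v).
Proof.
move=> m_gt0; pose sphere := sqr_norm @^-1` [set 1].
have sphere0 : sphere !=set0.
  exists (delta_mx 0 (Ordinal m_gt0)); rewrite /sphere /= /sqr_norm (bigD1 (Ordinal m_gt0)) //=.
  rewrite big1 => [|i /negbTE i_neq]; first by rewrite !mxE !eqxx expr1n addr0.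
  by rewrite mxE i_neq andbF expr0n.
have sphere_compact : compact sphere.
  apply: bounded_closed_compact.
    exists 1; split => // r r_gt1 v /= v1.
    rewrite [X in X <= _]/Num.norm /= mx_normrE; apply: bigmax_le => [|ij _]; first exact: ltW (lt_trans ltr01 r_gt1).
    apply: le_trans (ltW r_gt1); rewrite ord1; apply: le_of_sqr_le => //.
    rewrite expr1n real_normK ?num_real // -v1 /sqr_norm (bigD1 ij.2) //= lerDl.
    by apply: sumr_ge0 => *; rewrite sqr_ge0.
  by apply: preimage_closed; [move=> x _; exact: sqr_norm_continuous | exact: closed_eq].
have [c /set_mem c1 c_min] :=
  compact_EVT_min sphere0 sphere_compact (continuous_subspaceT quad_continuous).
exists c^T => [|v]; first by rewrite -sqr_norm_tr trmxK.
rewrite -sqr_norm_tr -!quad_tr trmxK; set w := v^T.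
have [w0|w0] := eqVneq (sqr_norm w) 0.
  have /psumr_eq0P wi0 := w0.
  rewrite w0 mulr0 /quad big1 // => i _; rewrite (eqP (_ : w 0 i == 0)) ?mul0r //.
  by rewrite -sqrf_eq0 wi0 // => k _; rewrite sqr_ge0.
have w_gt0 : 0 < sqr_norm w by rewrite lt_def w0 sumr_ge0 // => *; rewrite sqr_ge0.
pose a := (Num.sqrt (sqr_norm w))^-1.
have a2 : a ^+ 2 = (sqr_norm w)^-1 by rewrite exprVn sqr_sqrtr // ltW.
have : quad c <= quad (a *: w).
  by apply: c_min; apply/mem_set; rewrite /sphere /= sqr_normZ a2 mulVf.
by rewrite quadZ a2 -ler_pdivlMr // mulrC.
Qed.

End RayleighQuotient.

Lemma sym_eigenvalue_min {R : realType} {m : nat} {M : 'M[R]_m} : (0 < m)%N -> M^T = M ->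
  exists2 lam, eigenvalue M lam & forall v, lam * dotv v v <= dotv v (M *m v).
Proof.
move=> m_gt0 M_sym; have [y y1 y_min] := rayleigh_min M m_gt0.
set lam := dotv y (M *m y) in y_min.
pose excess v := dotv v (M *m v) - lam * dotv v v.
have excess_ge0 v : 0 <= excess v by rewrite subr_ge0.
have [z zE] : exists z, z = M *m y - lam *: y by eexists.
(* [y] minimises [excess], with value 0, so the linear term of
   [t |-> excess (y + t z)] vanishes. *)
have excess_line t : excess (y + t *: z) = (2 * dotv z z) * t + excess z * t ^+ 2.
  have Mzy : dotv y (M *m z) = dotv z (M *m y) by rewrite dotv_mulmxr M_sym dotvC.
  have zz : dotv z z = dotv z (M *m y) - lam * dotv z y by rewrite {2}zE dotvBr dotvZr.
  rewrite /excess mulmxDr -scalemxAr !dotvDl !dotvDr !dotvZl !dotvZr y1 Mzy (dotvC y z) zz.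
  by rewrite -/lam; ring.
have /eqP : 2 * dotv z z = 0.
  apply: (quadratic_ge0_lin_coef_eq0 _ _ (excess_ge0 z)) => t.
  by rewrite -excess_line excess_ge0.
rewrite mulf_eq0 pnatr_eq0 /= => /eqP/dotvv_eq0 z0.
have My : M *m y = lam *: y by apply/eqP; rewrite -subr_eq0 -zE z0.
exists lam => //; apply/eigenvalueP; exists y^T.
  by rewrite -M_sym -trmx_mul My linearZ.
apply/eqP => /(congr1 trmx); rewrite trmxK trmx0 => y0.
by move: y1; rewrite y0 dotv0l => /eqP; rewrite eq_sym oner_eq0.
Qed.

Section SmallestSingularValue.
Context {R : realType} {m n : nat} {J : 'M[R]_(m, n)}.

Lemma dotv_mulmx_tr (w : 'cV[R]_m) : dotv w (J *m J^T *m w) = norm2 (J^T *m w) ^+ 2.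
Proof. by rewrite -mulmxA dotv_mulmxr norm2_sqr. Qed.

Lemma eigenvalue_mulmx_tr_ge0 a : eigenvalue (J *m J^T) a -> 0 <= a.
Proof.
move=> /eigenvalueP [v va v0]; have w_gt0 : 0 < dotv v^T v^T.
  rewrite lt_def dotvv_ge0 andbT; apply: contra v0 => /eqP/dotvv_eq0/(congr1 trmx).
  by rewrite trmxK trmx0 => ->.
have := dotv_mulmx_tr v^T.
rewrite -{1}[J *m J^T]trmxK trmx_mul trmxK -trmx_mul va linearZ /= dotvZr => va2.
by rewrite -(pmulr_lge0 _ w_gt0) va2 sqr_ge0.
Qed.

Lemma norm2_trmx_mulmx_ge {gamma : R} : (0 < m)%N -> 0 <= gamma -> gamma <= sigma_min J ->
  forall y : 'cV[R]_m, gamma * norm2 y <= norm2 (J^T *m y).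
Proof.
move=> m_gt0 gamma0 gamma_le y.
have JJT_sym : (J *m J^T)^T = J *m J^T by rewrite trmx_mul trmxK.
have [lam lam_eig lam_min] := sym_eigenvalue_min m_gt0 JJT_sym.
have lam0 := eigenvalue_mulmx_tr_ge0 _ lam_eig.
have gamma2 : gamma ^+ 2 <= lam.
  rewrite -(sqr_sqrtr lam0) ler_sqr ?nnegrE ?sqrtr_ge0 //.
  apply: le_trans gamma_le _; rewrite ler_sqrt //.
  by apply: ge_inf => //; exists 0 => a; exact: eigenvalue_mulmx_tr_ge0.
apply: le_of_sqr_le; first exact: norm2_ge0.
rewrite -dotv_mulmx_tr exprMn norm2_sqr; apply: le_trans (lam_min y).
by rewrite ler_wpM2r ?dotvv_ge0.
Qed.

Lemma mulmx_tr_unit {gamma : R} : 0 < gamma ->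
  (forall y : 'cV[R]_m, gamma * norm2 y <= norm2 (J^T *m y)) -> J *m J^T \in unitmx.
Proof.
move=> gamma_gt0 J_ge; apply: unitmx_of_ker => y JJTy0; apply: norm2_eq0.
have : norm2 (J^T *m y) = 0 by apply/eqP; rewrite -sqrf_eq0 -dotv_mulmx_tr JJTy0 dotv0r.
move: (J_ge y) => /[swap] ->; rewrite pmulr_rle0 // => y_le0.
by apply/eqP; rewrite eq_le y_le0 norm2_ge0.
Qed.

End SmallestSingularValue.

Lemma norm2_least_norm_solution_le {R : realType} {m n : nat} {A : 'M[R]_(m, n)} {k : R}
    (c : 'cV[R]_m) : 0 < k -> (forall y : 'cV[R]_m, k * norm2 y <= norm2 (A^T *m y)) ->
  norm2 (A^T *m (invmx (A *m A^T) *m c)) <= k^-1 * norm2 c.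
Proof.
move=> k_gt0 A_ge; have AAT_unit := mulmx_tr_unit k_gt0 A_ge.
set z := invmx (A *m A^T) *m c; set v := A^T *m z.
have v2 : norm2 v ^+ 2 <= norm2 z * norm2 c.
  rewrite norm2_sqr {1}/v dotv_mulmxl trmxK mulmxA /z mulmxA mulmxV // mul1mx.
  exact: dotv_le.
have [v0|v_gt0] := eqVneq (norm2 v) 0; first by rewrite v0 mulr_ge0 ?invr_ge0 ?norm2_ge0 ?ltW.
have {}v_gt0 : 0 < norm2 v by rewrite lt_def v_gt0 norm2_ge0.
rewrite mulrC ler_pdivlMr // -(ler_pM2l v_gt0) mulrA -expr2.
apply: le_trans (ler_wpM2r (ltW k_gt0) v2) _.
by rewrite mulrAC ler_wpM2r ?norm2_ge0 // mulrC A_ge.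
Qed.

(* [p], [q], [r], [b], [x] stand for |(I - Pt) g|, |Pt g|, |Pt x|, |(I - P) g|, |x| in
   [sqr_norm2_projP_le_perturbed]. *)
Lemma projection_gap_ineq {R : realFieldType} {p q r b x s : R} :
  0 <= p -> 0 <= q -> 0 <= r -> 0 <= b -> 0 <= x -> 0 <= s -> s < 1 ->
  x ^+ 2 = r ^+ 2 + p ^+ 2 -> p ^+ 2 - q * r <= b * x -> r <= s * x ->
  p ^+ 2 - b ^+ 2 <= s * (p ^+ 2 + q ^+ 2).
Proof.
move=> p0 q0 r0 b0 x0 s0 s_lt1 x2 pqr_le r_le.
have [pqr0|pqr_lt0] := leP 0 (p ^+ 2 - q * r); last first.
  have r2 : r ^+ 2 <= s ^+ 2 * (r ^+ 2 + p ^+ 2).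
    by rewrite -x2 -exprMn ler_sqr ?nnegrE // mulr_ge0.
  have : p ^+ 2 <= s ^+ 2 * (p ^+ 2 + q ^+ 2) by nra.
  nra.
set T := (p ^+ 2 - q ^+ 2) * r + 2 * p * q * p.
(* Cauchy-Schwarz in the plane, with [(p^2 - q^2)^2 + (2pq)^2 = (p^2 + q^2)^2]. *)
have T_le : T <= (p ^+ 2 + q ^+ 2) * x.
  apply: le_of_sqr_le; first by rewrite mulr_ge0 // addr_ge0 ?sqr_ge0.
  have lagrange : ((p ^+ 2 + q ^+ 2) * x) ^+ 2 - T ^+ 2
                = ((p ^+ 2 - q ^+ 2) * p - 2 * p * q * r) ^+ 2 by rewrite exprMn x2 /T; ring.
  by rewrite -subr_ge0 lagrange sqr_ge0.
have rT_le : r * T <= s * (p ^+ 2 + q ^+ 2) * x ^+ 2.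
  have [T0|T_gt0] := leP T 0.
    by apply: le_trans (_ : 0 <= _); [rewrite mulr_ge0_le0 | rewrite !mulr_ge0 ?addr_ge0 ?sqr_ge0].
  apply: le_trans (ler_wpM2r (ltW T_gt0) r_le) _.
  have -> : s * (p ^+ 2 + q ^+ 2) * x ^+ 2 = s * x * ((p ^+ 2 + q ^+ 2) * x) by ring.
  by rewrite ler_wpM2l ?mulr_ge0.
have bx2 : (p ^+ 2 - q * r) ^+ 2 <= b ^+ 2 * x ^+ 2 by rewrite -exprMn ler_sqr ?nnegrE ?mulr_ge0.
have : (p ^+ 2 - b ^+ 2) * x ^+ 2 <= s * (p ^+ 2 + q ^+ 2) * x ^+ 2.
  have : p ^+ 2 * x ^+ 2 - (p ^+ 2 - q * r) ^+ 2 = r * T by rewrite x2 /T; ring.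
  nra.
have [x_eq0|x_neq0] := eqVneq x 0; last by rewrite ler_pM2r // exprn_gt0 // lt_def x_neq0.
move=> _; move: r_le x2; rewrite x_eq0 mulr0 expr0n /= => r_le0 pr0.
nra.
Qed.

Section ProjectionPerturbation.
Context {R : realType} {m n : nat} {J Jt : 'M[R]_(m, n)} {gamma e : R}.
Hypothesis e_ge0 : 0 <= e.
Hypothesis e_lt_gamma : e < gamma.
Hypothesis J_ge : forall y : 'cV[R]_m, gamma * norm2 y <= norm2 (J^T *m y).
Hypothesis dJ_le : forall y : 'cV[R]_m, norm2 ((Jt - J)^T *m y) <= e * norm2 y.
Local Notation P := (projP J).
Local Notation Pt := (projP Jt).

Let gamma_gt0 : 0 < gamma. Proof. exact: le_lt_trans e_ge0 e_lt_gamma. Qed.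

Let JJT_unit : J *m J^T \in unitmx. Proof. exact: mulmx_tr_unit gamma_gt0 J_ge. Qed.

Lemma norm2_trmx_mulmx_perturbed_ge (y : 'cV[R]_m) : (gamma - e) * norm2 y <= norm2 (Jt^T *m y).
Proof.
have JTy : J^T *m y = Jt^T *m y - (Jt - J)^T *m y.
  by rewrite linearB /= mulmxBl opprB addrC subrK.
have := norm2B (Jt^T *m y) ((Jt - J)^T *m y); rewrite -JTy.
by have := J_ge y; have := dJ_le y; rewrite mulrBl; lra.
Qed.

Lemma perturbed_mulmx_tr_unit : Jt *m Jt^T \in unitmx.
Proof. by apply: mulmx_tr_unit norm2_trmx_mulmx_perturbed_ge; rewrite subr_gt0. Qed.

Let JtJT_unit : Jt *m J^T \in unitmx.
Proof.
apply: unitmx_of_ker => y JtJTy0; apply: norm2_eq0.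
have orth : dotv (J^T *m y) (Jt^T *m y) = 0 by rewrite dotv_mulmxr trmxK mulmxA JtJTy0 dotv0l.
have JTy2 : norm2 (J^T *m y) ^+ 2 <= norm2 (J^T *m y) * (e * norm2 y).
  rewrite norm2_sqr.
  have -> : dotv (J^T *m y) (J^T *m y) = - dotv (J^T *m y) ((Jt - J)^T *m y).
    by rewrite linearB /= mulmxBl dotvBr orth sub0r opprK.
  apply: le_trans (ler_norm _) _; rewrite normrN; apply: le_trans (normr_dotv_le _ _) _.
  by rewrite ler_wpM2l ?norm2_ge0 ?dJ_le.
have JTy_le : norm2 (J^T *m y) <= e * norm2 y.
  have [->|JTy_neq0] := eqVneq (norm2 (J^T *m y)) 0; first by rewrite mulr_ge0 ?norm2_ge0.
  by rewrite -(ler_pM2l (_ : 0 < norm2 (J^T *m y))) -?expr2 // lt_def JTy_neq0 norm2_ge0.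
apply/eqP; rewrite eq_le norm2_ge0 andbT.
by have := le_trans (J_ge y) JTy_le; rewrite -subr_ge0 -mulrBl nmulr_rge0 // subr_lt0.
Qed.

Lemma norm2_projP_perturbed_trmx_le (y : 'cV[R]_m) :
  norm2 (Pt *m (J^T *m y)) <= e / gamma * norm2 (J^T *m y).
Proof.
have -> : Pt *m (J^T *m y) = - (Pt *m ((Jt - J)^T *m y)).
  rewrite linearB /= [(_ - _) *m y]mulmxBl [Pt *m (_ - _)]mulmxBr [Pt *m (Jt^T *m y)]mulmxA.
  by rewrite (projP_mul_tr _ perturbed_mulmx_tr_unit) mul0mx sub0r opprK.
rewrite norm2N; apply: le_trans (norm2_projP_le _ perturbed_mulmx_tr_unit _) _.
apply: le_trans (dJ_le y) _; rewrite mulrAC -mulrA ler_wpM2l //.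
by rewrite ler_pdivlMr // mulrC J_ge.
Qed.

Lemma norm2_projP_perturbed_le (g : 'cV[R]_n) :
  norm2 (Pt *m g) <= norm2 (P *m g) + e / gamma * norm2 g.
Proof.
set y := invmx (J *m J^T) *m (J *m g).
have JTy_le : norm2 (J^T *m y) <= norm2 g.
  apply: le_of_sqr_le; first exact: norm2_ge0.
  by rewrite [X in _ <= X](norm2_projP_pythagoras _ JJT_unit g) lerDr sqr_ge0.
rewrite {1}(projP_decomp J g) mulmxDr; apply: le_trans (norm2D _ _) _.
apply: lerD; first exact: norm2_projP_le perturbed_mulmx_tr_unit _.
apply: le_trans (norm2_projP_perturbed_trmx_le y) _.
by rewrite ler_wpM2l // divr_ge0 // ltW.
Qed.

Lemma sqr_norm2_projP_le_perturbed (g : 'cV[R]_n) :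
  norm2 (P *m g) ^+ 2 <= norm2 (Pt *m g) ^+ 2 + e / gamma * norm2 g ^+ 2.
Proof.
have Jt_unit := perturbed_mulmx_tr_unit.
(* [x] lies in the range of [J^T] and has the same component as [g] in the range of [Jt^T]. *)
set x := J^T *m (invmx (Jt *m J^T) *m (Jt *m g)).
have Jtx : Jt *m x = Jt *m g by rewrite /x !mulmxA mulmxV // mul1mx.
set a := Jt^T *m (invmx (Jt *m Jt^T) *m (Jt *m g)).
have x_decomp : x = Pt *m x + a by rewrite {1}(projP_decomp Jt x) Jtx.
have g_decomp : g = Pt *m g + a := projP_decomp Jt g.
set p := norm2 a; set q := norm2 (Pt *m g); set r := norm2 (Pt *m x).
set b := norm2 (J^T *m (invmx (J *m J^T) *m (J *m g))).
have x2 : norm2 x ^+ 2 = r ^+ 2 + p ^+ 2 by rewrite (norm2_projP_pythagoras _ Jt_unit x) Jtx.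
have g2 : norm2 g ^+ 2 = q ^+ 2 + p ^+ 2 := norm2_projP_pythagoras _ Jt_unit g.
have Pg2 : norm2 (P *m g) ^+ 2 = norm2 g ^+ 2 - b ^+ 2.
  by rewrite (norm2_projP_pythagoras _ JJT_unit g) addrK.
have gx_le : p ^+ 2 - q * r <= b * norm2 x.
  have -> : p ^+ 2 = dotv g x - dotv (Pt *m g) (Pt *m x).
    rewrite {1}g_decomp {1}x_decomp !dotvDl !dotvDr !(dotv_projP_tr _ Jt_unit).
    by rewrite (dotvC a) (dotv_projP_tr _ Jt_unit) /p norm2_sqr; ring.
  have -> : dotv g x = dotv (J^T *m (invmx (J *m J^T) *m (J *m g))) x.
    by rewrite {1}(projP_decomp J g) dotvDl (dotv_projP_tr _ JJT_unit) add0r.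
  have PgPx_ge : - (q * r) <= dotv (Pt *m g) (Pt *m x).
    by rewrite lerNl -dotvNl; apply: le_trans (dotv_le _ _) _; rewrite norm2N.
  have : dotv (J^T *m (invmx (J *m J^T) *m (J *m g))) x <= b * norm2 x := dotv_le _ _.
  lra.
have r_le : r <= e / gamma * norm2 x := norm2_projP_perturbed_trmx_le _.
have s_ge0 : 0 <= e / gamma by rewrite divr_ge0 // ltW.
have s_lt1 : e / gamma < 1 by rewrite ltr_pdivrMr // mul1r.
have := projection_gap_ineq (norm2_ge0 a) (norm2_ge0 _) (norm2_ge0 _) (norm2_ge0 _)
  (norm2_ge0 x) s_ge0 s_lt1 x2 gx_le r_le.
by rewrite Pg2 g2 -/p -/q -/b; lra.
Qed.

End ProjectionPerturbation.

Section QuadraticSubproblem.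
Context {R : realType} {m n : nat} {A : 'M[R]_(m, n)} {gt d : 'cV[R]_n} {ct : 'cV[R]_m} {b : R}.
Hypothesis AAT_unit : A *m A^T \in unitmx.
Hypothesis b_gt0 : 0 < b.
Hypothesis d_feas : ct + A *m d = 0.
Hypothesis d_opt : forall dd : 'cV[R]_n, ct + A *m dd = 0 ->
  2^-1 * b * norm2 d ^+ 2 + dotv gt d <= 2^-1 * b * norm2 dd ^+ 2 + dotv gt dd.

Lemma qp_gradient_orth (w : 'cV[R]_n) : A *m w = 0 -> dotv (b *: d + gt) w = 0.
Proof.
move=> Aw0; apply: (quadratic_ge0_lin_coef_eq0 _ (2^-1 * b * dotv w w)).
  by rewrite !mulr_ge0 ?dotvv_ge0 ?invr_ge0 // ltW.
move=> t; have := d_opt (d + t *: w).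
rewrite mulmxDr -scalemxAr Aw0 scaler0 addr0 => /(_ d_feas).
rewrite !norm2_sqr !dotvDl !dotvDr !dotvZl !dotvZr (dotvC w d) -subr_ge0.
by congr (0 <= _); field.
Qed.

Lemma qp_solution : d = - (b^-1 *: (projP A *m gt)) - A^T *m (invmx (A *m A^T) *m ct).
Proof.
set u := b *: d + gt.
have Pu0 : projP A *m u = 0.
  have := qp_gradient_orth (projP A *m u); rewrite mulmxA (mulmx_projP _ AAT_unit) mul0mx.
  by rewrite (dotv_projP _ AAT_unit) => /(_ erefl)/eqP; rewrite sqrf_eq0 => /eqP/norm2_eq0.
have Ad : A *m d = - ct by apply/eqP; rewrite -addr_eq0 addrC d_feas.
have bd : b *: d = A^T *m (invmx (A *m A^T) *m (A *m gt - b *: ct)) - gt.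
  have Au : A *m u = A *m gt - b *: ct by rewrite mulmxDr -scalemxAr Ad scalerN addrC.
  by rewrite -Au -[X in X - gt](add0r _) -Pu0 -projP_decomp addrK.
have b_neq0 : b != 0 by rewrite gt_eqF.
apply: (scalerI b_neq0); rewrite scalerBr scalerN scalerA mulfV // scale1r bd.
rewrite !mulmxBr -!scalemxAr {2}(projP_decomp A gt).
set X := A^T *m _; set Z := b *: _.
by rewrite opprD addrA addrAC (addrAC X) subrr add0r addrC.
Qed.

End QuadraticSubproblem.

Section ModelReduction.
Context {R : realType} {m n : nat} {J Jt : 'M[R]_(m, n)} {g gt d : 'cV[R]_n} {c ct : 'cV[R]_m}.
Context {gamma eJ eg ec b tau p : R}.
Hypothesis eJ_ge0 : 0 <= eJ.
Hypothesis eJ_lt_gamma : eJ < gamma.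
Hypothesis J_ge : forall y : 'cV[R]_m, gamma * norm2 y <= norm2 (J^T *m y).
Hypothesis dJ_le : forall v : 'cV[R]_n, norm1 ((Jt - J) *m v) <= eJ * norm2 v.
Hypothesis c_err : norm1 (ct - c) <= ec.
Hypothesis g_err : norm2 (gt - g) <= eg.
Hypothesis b_gt0 : 0 < b.
Hypothesis d_feas : ct + Jt *m d = 0.
Hypothesis d_opt : forall dd : 'cV[R]_n, ct + Jt *m dd = 0 ->
  2^-1 * b * norm2 d ^+ 2 + dotv gt d <= 2^-1 * b * norm2 dd ^+ 2 + dotv gt dd.
Hypothesis tau_lt1 : tau < 1.
Hypothesis p_ge : (1 - tau)^-1 * norminf (invmx (Jt *m Jt^T) *m Jt *m gt) <= p.

Local Notation P := (projP J).
Local Notation Pt := (projP Jt).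
Local Notation normal_step := (Jt^T *m (invmx (Jt *m Jt^T) *m ct)).

Let dJT_le (y : 'cV[R]_m) : norm2 ((Jt - J)^T *m y) <= eJ * norm2 y.
Proof.
by apply: norm2_trmx_mulmx_le => // v; apply: le_trans (norm2_le_norm1 _) (dJ_le v).
Qed.

Let Jt_ge := norm2_trmx_mulmx_perturbed_ge J_ge dJT_le.
Let Jt_unit : Jt *m Jt^T \in unitmx := perturbed_mulmx_tr_unit eJ_lt_gamma J_ge dJT_le.

Let b_inv_ge0 : 0 <= b^-1. Proof. by rewrite invr_ge0 ltW. Qed.

Let p_ge0 : 0 <= p.
Proof. by apply: le_trans p_ge; rewrite mulr_ge0 ?norminf_ge0 // invr_ge0 subr_ge0 ltW. Qed.

Lemma norm1_ct_le : norm1 ct <= norm1 c + ec.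
Proof. by rewrite -[ct](subrK c) addrC; apply: le_trans (norm1D _ _) _; rewrite lerD2l. Qed.

Lemma norm2_normal_step_le : norm2 normal_step <= (gamma - eJ)^-1 * (norm1 c + ec).
Proof.
apply: le_trans (norm2_least_norm_solution_le ct _ Jt_ge) _; first by rewrite subr_gt0.
apply: ler_wpM2l; first by rewrite invr_ge0 subr_ge0 ltW.
exact: le_trans (norm2_le_norm1 _) norm1_ct_le.
Qed.

Lemma dotv_tangential_step_ge :
  norm2 (P *m g) ^+ 2 - eJ / gamma * norm2 g ^+ 2 - eg * norm2 g <= dotv g (Pt *m gt).
Proof.
rewrite -[gt](subrK g) addrC mulmxDr dotvDr (dotv_projP _ Jt_unit) dotv_mulmxr projP_tr.
have := sqr_norm2_projP_le_perturbed eJ_ge0 eJ_lt_gamma J_ge dJT_le g.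
have : - (eg * norm2 g) <= dotv (Pt *m g) (gt - g).
  rewrite lerNl -dotvNl; apply: le_trans (dotv_le _ _) _; rewrite norm2N mulrC.
  by apply: ler_pM; rewrite ?norm2_ge0 ?(norm2_projP_le _ Jt_unit).
lra.
Qed.

Lemma dotv_normal_step_le :
  - dotv g normal_step <= (1 - tau) * p * (norm1 c + ec) + eg * (gamma - eJ)^-1 * (norm1 c + ec).
Proof.
set lam := invmx (Jt *m Jt^T) *m Jt *m gt.
have lam_le : norminf lam <= (1 - tau) * p by rewrite -ler_pdivrMl ?subr_gt0 // mulrC.
have -> : dotv g normal_step = dotv lam ct + dotv (g - gt) normal_step.
  have lamE : dotv lam ct = dotv gt normal_step.
    by rewrite dotv_mulmxl trmx_mul trmx_inv trmx_mul trmxK -mulmxA.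
  by rewrite lamE -dotvDl addrC subrK.
rewrite opprD lerD //.
  apply: le_trans (ler_norm _) _; rewrite normrN; apply: le_trans (normr_dotv_le_norminf _ _) _.
  apply: le_trans (ler_wpM2r (norm1_ge0 _) lam_le) _.
  by rewrite ler_wpM2l ?norm1_ct_le // mulr_ge0 // subr_ge0 ltW.
rewrite -dotvNl opprB; apply: le_trans (dotv_le _ _) _; rewrite -mulrA.
by apply: ler_pM; rewrite ?norm2_ge0 ?norm2_normal_step_le.
Qed.

Lemma norm2_step_le : norm2 d <=
  b^-1 * (norm2 (P *m g) + eJ / gamma * norm2 g + eg) + (gamma - eJ)^-1 * (norm1 c + ec).
Proof.
rewrite (qp_solution Jt_unit b_gt0 d_feas d_opt); apply: le_trans (norm2B _ _) _.
rewrite norm2N norm2Z (ger0_norm b_inv_ge0); apply: lerD; last exact: norm2_normal_step_le.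
apply: ler_wpM2l => //.
rewrite -[gt](subrK g) addrC mulmxDr; apply: le_trans (norm2D _ _) _.
apply: lerD; first exact: norm2_projP_perturbed_le eJ_ge0 eJ_lt_gamma J_ge dJT_le g.
exact: le_trans (norm2_projP_le _ Jt_unit _) g_err.
Qed.

Lemma norm1_linearized_constraint_le : norm1 (c + J *m d) <= ec + eJ * norm2 d.
Proof.
have -> : c + J *m d = - (ct - c) - (Jt - J) *m d.
  have Jtd : Jt *m d = - ct by apply/eqP; rewrite -addr_eq0 addrC d_feas.
  by rewrite mulmxBl Jtd !opprB opprK addrA addrAC subrK.
by apply: le_trans (norm1D _ _) _; rewrite !norm1N lerD.
Qed.

Lemma model_reduction_le :
  dotv g d + p * norm1 (c + J *m d) - p * norm1 c <=
  - (b^-1 * norm2 (P *m g) ^+ 2 + tau * p * norm1 c)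
  + (b^-1 * (norm2 g ^+ 2 * gamma^-1 * eJ + eg * norm2 g)
    + eg * (gamma - eJ)^-1 * (norm1 c + ec)
    + p * ((2 - tau) * ec
           + eJ * ((gamma - eJ)^-1 * (norm1 c + ec)
                   + b^-1 * (norm2 (P *m g) + norm2 g * gamma^-1 * eJ + eg)))).
Proof.
have gd : dotv g d = - (b^-1 * dotv g (Pt *m gt)) - dotv g normal_step.
  by rewrite {1}(qp_solution Jt_unit b_gt0 d_feas d_opt) dotvBr dotvNr dotvZr.
have := ler_wpM2l b_inv_ge0 dotv_tangential_step_ge.
have := ler_wpM2l p_ge0 norm1_linearized_constraint_le.
have := ler_wpM2l p_ge0 (ler_wpM2l eJ_ge0 norm2_step_le).
have := dotv_normal_step_le.
rewrite gd; lra.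
Qed.

End ModelReduction.

Theorem corollary3p2 (R : realType) (n m : nat)
  (f : 'cV[R]_n -> R) (c : 'cV[R]_n -> 'cV[R]_m)
  (g : 'cV[R]_n -> 'cV[R]_n) (J : 'cV[R]_n -> 'M[R]_(m, n))
  (ft : 'cV[R]_n -> R) (ct : 'cV[R]_n -> 'cV[R]_m)
  (gt : 'cV[R]_n -> 'cV[R]_n) (Jt : 'cV[R]_n -> 'M[R]_(m, n))
  (eps_f eps_c eps_g eps_J gamma b_u tau theta1 : R)
  (x : nat -> 'cV[R]_n) (beta pi : nat -> R) (d : nat -> 'cV[R]_n) :
  (0 < m)%N -> (m < n)%N ->
  (* g = grad f, J = Jacobian of c (directional derivatives) *)
  (forall z v : 'cV[R]_n,
      is_derive (0 : R) (1 : R) (fun t : R => f (z + t *: v)) (dotv (g z) v)) ->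
  (forall (z v : 'cV[R]_n) (i : 'I_m),
      is_derive (0 : R) (1 : R) (fun t : R => c (z + t *: v) i 0) ((J z *m v) i 0)) ->
  (* noise bounds *)
  (forall z, `|ft z - f z| <= eps_f) ->
  (forall z, norm1 (ct z - c z) <= eps_c) ->
  (forall z, norm2 (gt z - g z) <= eps_g) ->
  (forall z, opnorm12 (Jt z - J z) <= eps_J) ->
  (* singular value bound *)
  eps_J < gamma ->
  (forall k, gamma <= sigma_min (J (x k))) ->
  (* step parameters *)
  (forall k, 0 < beta k <= b_u) ->
  (forall k, ct (x k) + Jt (x k) *m d k = 0 /\
     forall dd : 'cV[R]_n, ct (x k) + Jt (x k) *m dd = 0 ->
       2^-1 * beta k * norm2 (d k) ^+ 2 + dotv (gt (x k)) (d k)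
       <= 2^-1 * beta k * norm2 dd ^+ 2 + dotv (gt (x k)) dd) ->
  0 < tau < 1 ->
  (forall k, (1 - tau)^-1 *
      norminf (invmx (Jt (x k) *m (Jt (x k))^T) *m Jt (x k) *m gt (x k)) <= pi k) ->
  let delta := (gamma - eps_J)^-1 in
  let eta := gamma^-1 in
  let psi := fun (p : R) (z : 'cV[R]_n) =>
    b_u^-1 * norm2 (projP (J z) *m g z) ^+ 2 + p * tau * norm1 (c z) in
  let E := fun (z : 'cV[R]_n) (b p : R) =>
    b^-1 * (norm2 (g z) ^+ 2 * eta * eps_J + eps_g * norm2 (g z))
    + eps_g * delta * (norm1 (c z) + eps_c)
    + p * ((2 - tau) * eps_c
           + eps_J * (delta * (norm1 (c z) + eps_c)
                      + b^-1 * (norm2 (projP (J z) *m g z)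
                                + norm2 (g z) * eta * eps_J + eps_g))) in
  let ell := fun k : nat =>
    dotv (g (x k)) (d k) + pi k * norm1 (c (x k) + J (x k) *m d k)
    - pi k * norm1 (c (x k)) in
  0 <= theta1 < 1 ->
  forall k : nat,
    E (x k) (beta k) (pi k) / (1 - theta1) <= psi (pi k) (x k) ->
    ell k <= - theta1 * ((beta k)^-1 * dotv (g (x k)) (projP (J (x k)) *m g (x k))
                         + tau * pi k * norm1 (c (x k)))
    /\ - theta1 * ((beta k)^-1 * dotv (g (x k)) (projP (J (x k)) *m g (x k))
                   + tau * pi k * norm1 (c (x k)))
       <= - theta1 * psi (pi k) (x k).
Proof.
move=> m_gt0 m_lt_n _ _ _ c_err g_err J_err eJ_lt_gamma sigma_ge beta_bnd qp tau_bnd pi_ge.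
move=> delta eta psi E ell /andP[theta_ge0 theta_lt1] k E_le.
rewrite /ell /psi /E /delta /eta in E_le *.
have eJ_ge0 : 0 <= eps_J.
  exact: le_trans (opnorm12_ge0 _ (ltn_trans m_gt0 m_lt_n)) (J_err (x k)).
have gamma_gt0 : 0 < gamma := le_lt_trans eJ_ge0 eJ_lt_gamma.
have J_ge := norm2_trmx_mulmx_ge m_gt0 (ltW gamma_gt0) (sigma_ge k).
have dJ_le v : norm1 ((Jt (x k) - J (x k)) *m v) <= eps_J * norm2 v.
  by apply: le_trans (norm1_mulmx_le _ v) _; rewrite ler_wpM2r ?norm2_ge0.
have /andP[beta_gt0 beta_le] := beta_bnd k.
have [d_feas d_opt] := qp k.
have /andP[_ tau_lt1] := tau_bnd.
have := model_reduction_le eJ_ge0 eJ_lt_gamma J_ge dJ_le (c_err _) (g_err _) beta_gt0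
  d_feas d_opt tau_lt1 (pi_ge k).
have theta1_gt0 : 0 < 1 - theta1 by rewrite subr_gt0.
move: E_le; rewrite ler_pdivrMr // (dotv_projP _ (mulmx_tr_unit gamma_gt0 J_ge)).
set PG2 := norm2 (projP (J (x k)) *m g (x k)) ^+ 2; set C := norm1 (c (x k)).
have psi_le : b_u^-1 * PG2 + pi k * tau * C <= (beta k)^-1 * PG2 + tau * pi k * C.
  rewrite [pi k * tau]mulrC lerD2r ler_wpM2r ?sqr_ge0 //.
  by rewrite lef_pV2 ?posrE // (lt_le_trans beta_gt0 beta_le).
have := ler_wpM2l (ltW theta1_gt0) psi_le; have := ler_wpM2l theta_ge0 psi_le.
by split; lra.
Qed.
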